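(* Let $Y=\{(x,y)\in\mathbb{R}^2:(x/a)^2+y^2=1\}$ with $1<a\le\sqrt2$, and let $p\in Y$. The only local extrema of $d_p:Y\to\mathbb{R}$, $d_p(q)=d(p,q)$, are a global minimum at $p$ and a global maximum at $h^{-1}(p)$. Consequently, every nonempty intersection of $Y$ with a Euclidean ball centered at a point of $Y$ is either contractible or all of $Y$.
   Context: $d$ is the Euclidean metric on $\mathbb{R}^2$. $h:Y\to Y$ sends $p$ to the unique point of the intersection of the normal line to $Y$ at $p$ with $Y\setminus\{p\}$; for $1<a\le\sqrt2$ this map is a bijection, and $h^{-1}$ denotes its inverse. *)

From Stdlib Require Import Reals Lra.
Open Scope R_scope.

Definition point : Type := (R * R)%type.

Definition edist (p q : point) : R :=
  sqrt ((fst p - fst q) ^ 2 + (snd p - snd q) ^ 2).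

Definition onY (a : R) (p : point) : Prop :=
  (fst p / a) ^ 2 + (snd p) ^ 2 = 1.

(* The normal line to Y at p = (x,y) is p + t * grad, grad = (x/a^2, y)
   (gradient of (x/a)^2 + y^2). *)
Definition on_normal (a : R) (p q : point) : Prop :=
  exists t : R, fst q = fst p + t * (fst p / a ^ 2) /\
                snd q = snd p + t * snd p.

(* h_rel a p q  <->  q = h(p): q is a point of Y \ {p} on the normal line
   to Y at p (by the context this point is unique). Hence h_rel a q p
   means q = h^{-1}(p). *)
Definition h_rel (a : R) (p q : point) : Prop :=
  onY a p /\ onY a q /\ q <> p /\ on_normal a p q.

Definition local_min_on (S : point -> Prop) (f : point -> R) (q : point) : Prop :=
  S q /\ exists eps, 0 < eps /\
    forall r, S r -> edist r q < eps -> f q <= f r.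
Definition local_max_on (S : point -> Prop) (f : point -> R) (q : point) : Prop :=
  S q /\ exists eps, 0 < eps /\
    forall r, S r -> edist r q < eps -> f r <= f q.
Definition local_extremum_on (S : point -> Prop) (f : point -> R) (q : point) : Prop :=
  local_min_on S f q \/ local_max_on S f q.

Definition global_min_on (S : point -> Prop) (f : point -> R) (q : point) : Prop :=
  S q /\ forall r, S r -> f q <= f r.
Definition global_max_on (S : point -> Prop) (f : point -> R) (q : point) : Prop :=
  S q /\ forall r, S r -> f r <= f q.

Definition contractible (S : point -> Prop) : Prop :=
  exists (x0 : point) (H : R -> point -> point),
    S x0 /\
    (forall t x, 0 <= t <= 1 -> S x -> S (H t x)) /\
    (forall x, S x -> H 0 x = x) /\
    (forall x, S x -> H 1 x = x0) /\
    (forall t x, 0 <= t <= 1 -> S x ->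
       forall eps, 0 < eps -> exists delta, 0 < delta /\
         forall t' x', 0 <= t' <= 1 -> S x' ->
           Rabs (t - t') < delta -> edist x x' < delta ->
           edist (H t x) (H t' x') < eps).

Definition open_ball (c : point) (r : R) (q : point) : Prop := edist c q < r.
Definition closed_ball (c : point) (r : R) (q : point) : Prop := edist c q <= r.

(* Parametrize Y by [ellipse a th = (a cos th, sin th)] and write p = ellipse a t0.
   With b = a^2 - 1 and th = t0 + 2 be, the derivative of th |-> |p - ellipse a th|^2
   is a positive multiple of
     W(be) = cot be + b sin(t0 + be) cos(t0 + be) / (1 + b sin(t0 + be)^2).
   For b <= 1 one has W' <= 1 - 1 / sin(be)^2 <= 0 on (0, PI), with equality at most at
   be = PI / 2, so W changes sign exactly once: over one period the distance increases
   from t0 up to a unique t1 and then decreases. Its critical points are the points whose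
   normal line passes through p, so ellipse a t1 = h^-1(p) is the only local extremum
   besides p, and it is the global maximum.
   A ball centred at p thus either contains h^-1(p), hence all of Y, or meets Y in an arc
   avoiding it. Measuring parameters from the antipode of t1, every point of the arc slides
   linearly in parameter towards p; by unimodality its distance to p only decreases along
   the way, which contracts the arc onto p. *)

From Stdlib Require Import Reals Ranalysis5 Lra Psatz Classical.
From Coquelicot Require Import Coquelicot.
Open Scope R_scope.

(** * Parametrization of Y *)

Definition ellipse (a th : R) : point := (a * cos th, sin th).

Lemma onY_ellipse a th : 0 < a -> onY a (ellipse a th).
Proof.
  intros ha. unfold onY, ellipse; simpl.
  replace (a * cos th / a) with (cos th) by (field; lra).
  pose proof (sin2_cos2 th) as e. unfold Rsqr in e. lra.
Qed.

Lemma ellipse_period a th : ellipse a (th + 2 * PI) = ellipse a th.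
Proof.
  unfold ellipse. replace (th + 2 * PI) with (th + 2 * INR 1 * PI) by (simpl; ring).
  now rewrite cos_period, sin_period.
Qed.

Lemma edist_self p : edist p p = 0.
Proof.
  unfold edist. rewrite !Rminus_diag. replace (0 ^ 2 + 0 ^ 2) with 0 by ring. apply sqrt_0.
Qed.

Lemma edist_coord_le p q :
  Rabs (fst p - fst q) <= edist p q /\ Rabs (snd p - snd q) <= edist p q.
Proof.
  unfold edist. rewrite <- !sqrt_Rsqr_abs, !Rsqr_pow2.
  pose proof (pow2_ge_0 (fst p - fst q)). pose proof (pow2_ge_0 (snd p - snd q)).
  split; apply sqrt_le_1_alt; lra.
Qed.

Lemma edist_le_abs_sum p q :
  edist p q <= Rabs (fst p - fst q) + Rabs (snd p - snd q).
Proof.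
  unfold edist.
  rewrite <- (sqrt_pow2 (Rabs (fst p - fst q) + Rabs (snd p - snd q)))
    by (pose proof (Rabs_pos (fst p - fst q)); pose proof (Rabs_pos (snd p - snd q)); lra).
  apply sqrt_le_1_alt.
  rewrite <- (pow2_abs (fst p - fst q)), <- (pow2_abs (snd p - snd q)).
  pose proof (Rabs_pos (fst p - fst q)). pose proof (Rabs_pos (snd p - snd q)). nra.
Qed.

Lemma Rabs_cos_sub_le x y : Rabs (cos x - cos y) <= Rabs (x - y).
Proof.
  destruct (MVT_abs cos (fun c => - sin c) y x) as [c [e _]].
  { intros c _. apply derivable_pt_lim_cos. }
  rewrite e, Rabs_Ropp.
  assert (Rabs (sin c) <= 1) by (apply Rabs_le, SIN_bound).
  pose proof (Rabs_pos (x - y)). nra.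
Qed.

Lemma Rabs_sin_sub_le x y : Rabs (sin x - sin y) <= Rabs (x - y).
Proof.
  destruct (MVT_abs sin cos y x) as [c [e _]].
  { intros c _. apply derivable_pt_lim_sin. }
  rewrite e.
  assert (Rabs (cos c) <= 1) by (apply Rabs_le, COS_bound).
  pose proof (Rabs_pos (x - y)). nra.
Qed.

Lemma edist_ellipse_le a x y : 0 <= a ->
  edist (ellipse a x) (ellipse a y) <= (a + 1) * Rabs (x - y).
Proof.
  intros ha. eapply Rle_trans; [apply edist_le_abs_sum|]. unfold ellipse; simpl.
  rewrite <- Rmult_minus_distr_l, Rabs_mult, (Rabs_pos_eq a ha).
  pose proof (Rabs_cos_sub_le x y). pose proof (Rabs_sin_sub_le x y). nra.
Qed.

Lemma edist_ellipse_lt a x y eps : 0 <= a -> Rabs (x - y) < eps / (a + 1) ->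
  edist (ellipse a x) (ellipse a y) < eps.
Proof.
  intros ha h. eapply Rle_lt_trans; [apply edist_ellipse_le; lra|].
  apply Rmult_lt_reg_r with (/ (a + 1)); [apply Rinv_0_lt_compat; lra|].
  replace ((a + 1) * Rabs (x - y) * / (a + 1)) with (Rabs (x - y)) by (field; lra).
  exact h.
Qed.

Definition sqdist (a : R) (p : point) (th : R) : R :=
  (fst p - a * cos th) ^ 2 + (snd p - sin th) ^ 2.
Definition sqdist' (a : R) (p : point) (th : R) : R :=
  2 * (fst p - a * cos th) * (a * sin th) - 2 * (snd p - sin th) * cos th.

Lemma edist_ellipse a p th : edist p (ellipse a th) = sqrt (sqdist a p th).
Proof. reflexivity. Qed.

Lemma sqdist_derive a p th : derivable_pt_lim (sqdist a p) th (sqdist' a p th).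
Proof. apply is_derive_Reals. unfold sqdist, sqdist'. auto_derive; [easy|]. ring. Qed.

Lemma sqdist_nonneg a p th : 0 <= sqdist a p th.
Proof.
  unfold sqdist. pose proof (pow2_ge_0 (fst p - a * cos th)).
  pose proof (pow2_ge_0 (snd p - sin th)). lra.
Qed.

Lemma sqdist_period a p th : sqdist a p (th + 2 * PI) = sqdist a p th.
Proof.
  unfold sqdist. replace (th + 2 * PI) with (th + 2 * INR 1 * PI) by (simpl; ring).
  now rewrite cos_period, sin_period.
Qed.

Lemma sqdist_ellipse_self a th : sqdist a (ellipse a th) th = 0.
Proof. unfold sqdist, ellipse; simpl. ring. Qed.

Lemma on_normal_iff a p th : 0 < a ->
  (on_normal a (ellipse a th) p <-> sqdist' a p th = 0).
Proof.
  intros ha. destruct p as [u v]. unfold on_normal, ellipse, sqdist'; simpl. split.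
  - intros [t [e1 e2]]. rewrite e1, e2. field. lra.
  - intros e. destruct (Req_dec (cos th) 0) as [hc|hc].
    + pose proof (sin2_cos2 th) as q. unfold Rsqr in q.
      assert (hs : sin th <> 0) by nra.
      rewrite hc in e |- *. assert (u = 0) by (apply (Rmult_eq_reg_r (a * sin th)); nra).
      exists ((v - sin th) / sin th). split; field_simplify; auto; lra.
    + exists (a * (u - a * cos th) / cos th). split.
      * field. lra.
      * apply Rmult_eq_reg_r with (cos th); auto. field_simplify; nra.
Qed.

Lemma cos_sin_double_atan_half X Y : X ^ 2 + Y ^ 2 = 1 -> 1 + X <> 0 ->
  cos (2 * atan (Y / (1 + X))) = X /\ sin (2 * atan (Y / (1 + X))) = Y.
Proof.
  intros e h.
  set (u := Y / (1 + X)).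
  assert (hu : u * u = (1 - X) / (1 + X)) by (unfold u; field_simplify_eq; auto; nra).
  assert (hr : 0 < 1 + u²) by (pose proof (Rle_0_sqr u); lra).
  pose proof (sqrt_sqrt (1 + u²) ltac:(lra)) as hs.
  pose proof (sqrt_lt_R0 _ hr) as hs0.
  rewrite cos_2a, sin_2a, cos_atan, sin_atan.
  set (r := sqrt (1 + u²)) in *. unfold Rsqr in hs. rewrite hu in hs.
  split.
  - replace (1 / r * (1 / r) - u / r * (u / r)) with ((1 - u * u) / (r * r)) by (field; lra).
    rewrite hs, hu. field. lra.
  - replace (2 * (u / r) * (1 / r)) with (2 * u / (r * r)) by (field; lra).
    rewrite hs. unfold u. field. lra.
Qed.

(* [(rot_x, rot_y)] are the coordinates of [(x / a, y)] rotated by [-k], so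
   [ellipse_angle a k q] is the parameter of [q] relative to [k], taken in
   [(-PI, PI)] via the half-angle formula. *)
Definition rot_x (a k : R) (q : point) : R := cos k * (fst q / a) + sin k * snd q.
Definition rot_y (a k : R) (q : point) : R := cos k * snd q - sin k * (fst q / a).
Definition ellipse_angle (a k : R) (q : point) : R :=
  2 * atan (rot_y a k q / (1 + rot_x a k q)).

Lemma ellipse_angle_bound a k q : Rabs (ellipse_angle a k q) < PI.
Proof.
  unfold ellipse_angle. pose proof (atan_bound (rot_y a k q / (1 + rot_x a k q))).
  apply Rabs_def1; lra.
Qed.

Lemma ellipse_angle_spec a k q : 0 < a -> onY a q -> q <> ellipse a (k + PI) ->
  1 + rot_x a k q <> 0 /\ ellipse a (k + ellipse_angle a k q) = q.
Proof.
  intros ha hq hne.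
  destruct q as [x y]. unfold onY in hq; cbn [fst snd] in hq.
  pose proof (sin2_cos2 k) as ek. unfold Rsqr in ek.
  set (c := x / a) in *.
  assert (hx : x = a * c) by (unfold c; field; lra).
  set (X := rot_x a k (x, y)). set (Y := rot_y a k (x, y)).
  assert (hc : c = cos k * X - sin k * Y).
  { unfold X, Y, rot_x, rot_y; simpl; fold c. rewrite <- (Rmult_1_r c) at 1. rewrite <- ek. ring. }
  assert (hy : y = sin k * X + cos k * Y).
  { unfold X, Y, rot_x, rot_y; simpl; fold c. rewrite <- (Rmult_1_r y) at 1. rewrite <- ek. ring. }
  assert (eXY : X ^ 2 + Y ^ 2 = 1).
  { transitivity ((c ^ 2 + y ^ 2) * (sin k * sin k + cos k * cos k)).
    - unfold X, Y, rot_x, rot_y; simpl; fold c. ring.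
    - rewrite hq, ek. ring. }
  assert (hX : 1 + X <> 0).
  { intros h0. apply hne. assert (X = -1) by lra. assert (Y = 0) by nra.
    unfold ellipse. rewrite neg_cos, neg_sin, hx, hc, hy. f_equal; subst X Y; nra. }
  split; auto.
  destruct (cos_sin_double_atan_half X Y eXY hX) as [h1 h2].
  unfold ellipse, ellipse_angle. fold X Y. rewrite cos_plus, sin_plus, h1, h2, hx, hc, hy.
  f_equal; ring.
Qed.

Lemma ellipse_surj a q t : 0 < a -> onY a q ->
  exists th, t <= th < t + 2 * PI /\ q = ellipse a th.
Proof.
  intros ha hq. pose proof PI_RGT_0.
  destruct (classic (q = ellipse a t)) as [e|ne].
  - exists t. split; [lra|auto].
  - rewrite <- (ellipse_period a t) in ne. replace (t + 2 * PI) with (t + PI + PI) in ne by ring.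
    destruct (ellipse_angle_spec a (t + PI) q ha hq ne) as [_ e].
    pose proof (ellipse_angle_bound a (t + PI) q) as hb. apply Rabs_def2 in hb.
    exists (t + PI + ellipse_angle a (t + PI) q). split; [lra|auto].
Qed.

Lemma continuous_linear2 (u v : R) (q : R * R) :
  continuous (fun q : R * R => u * fst q + v * snd q) q.
Proof.
  destruct q as [x y].
  apply (continuous_plus (fun q : R * R => u * fst q) (fun q => v * snd q)).
  - apply (continuous_scal_r u (fun q : R * R => fst q)), continuous_fst.
  - apply (continuous_scal_r v (fun q : R * R => snd q)), continuous_snd.
Qed.

Lemma continuous_ellipse_angle a k q : 1 + rot_x a k q <> 0 ->
  continuous (ellipse_angle a k) q.
Proof.
  intros h.
  assert (hx : forall q, continuous (rot_x a k) q).
  { intros z.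
    assert (e : forall w : R * R, cos k / a * fst w + sin k * snd w = rot_x a k w)
      by (intros w; unfold rot_x, Rdiv; ring).
    apply (continuous_ext _ _ _ e), continuous_linear2. }
  assert (hy : continuous (rot_y a k) q).
  { assert (e : forall w : R * R, - sin k / a * fst w + cos k * snd w = rot_y a k w)
      by (intros w; unfold rot_y, Rdiv; ring).
    apply (continuous_ext _ _ _ e), continuous_linear2. }
  apply (continuous_scal_r 2 (fun q => atan (rot_y a k q / (1 + rot_x a k q)))).
  apply (continuous_comp (fun q => rot_y a k q / (1 + rot_x a k q)) atan);
    [|apply continuous_atan].
  apply (continuous_mult (rot_y a k) (fun q => / (1 + rot_x a k q))); [exact hy|].
  apply (continuous_comp (fun q => 1 + rot_x a k q) Rinv).
  - apply (continuous_plus (fun _ => 1) (rot_x a k)); [apply continuous_const|auto].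
  - now apply continuous_Rinv.
Qed.

Lemma continuous_edist_lt (f : R * R -> R) q : continuous f q ->
  forall eps, 0 < eps -> exists d, 0 < d /\
    forall q', edist q q' < d -> Rabs (f q' - f q) < eps.
Proof.
  intros hc eps he.
  destruct (proj1 (filterlim_locally f (f q)) hc (mkposreal eps he)) as [d hd].
  exists d. split; [apply cond_pos|]. intros q' hq'.
  destruct (edist_coord_le q q') as [h1 h2].
  apply hd. split; unfold ball; simpl; unfold AbsRing_ball, abs, minus, plus, opp; simpl;
    rewrite <- Rminus_def, Rabs_minus_sym; lra.
Qed.

Definition contraction (a k s t : R) (q : point) : point :=
  ellipse a (k + (1 - t) * ellipse_angle a k q + t * s).

Lemma affine_path_dist x x' s t t' : 0 <= t <= 1 -> Rabs x' < PI -> Rabs s < PI ->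
  Rabs ((1 - t) * x + t * s - ((1 - t') * x' + t' * s)) <=
  Rabs (x - x') + 2 * PI * Rabs (t - t').
Proof.
  intros ht hx' hs.
  replace ((1 - t) * x + t * s - ((1 - t') * x' + t' * s))
    with ((1 - t) * (x - x') + (t - t') * (s - x')) by ring.
  eapply Rle_trans; [apply Rabs_triang|]. rewrite !Rabs_mult, (Rabs_pos_eq (1 - t)) by lra.
  assert (Rabs (s - x') <= 2 * PI).
  { pose proof (Rabs_triang s (- x')) as hsx. rewrite Rabs_Ropp in hsx. unfold Rminus. lra. }
  pose proof (Rabs_pos (x - x')). pose proof (Rabs_pos (t - t')).
  assert (t * Rabs (x - x') >= 0) by (apply Rle_ge, Rmult_le_pos; lra).
  assert (Rabs (t - t') * Rabs (s - x') <= Rabs (t - t') * (2 * PI))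
    by (apply Rmult_le_compat_l; lra).
  lra.
Qed.

Lemma contraction_continuous a k s t q : 0 <= a -> 1 + rot_x a k q <> 0 ->
  0 <= t <= 1 -> Rabs s < PI ->
  forall eps, 0 < eps -> exists d, 0 < d /\ forall t' q',
    Rabs (t - t') < d -> edist q q' < d ->
    edist (contraction a k s t q) (contraction a k s t' q') < eps.
Proof.
  intros ha hX ht hs eps he. pose proof PI_RGT_0.
  set (eta := eps / (a + 1) / 2).
  assert (heta : 0 < eta) by (unfold eta; apply Rdiv_lt_0_compat; [apply Rdiv_lt_0_compat|]; lra).
  destruct (continuous_edist_lt _ q (continuous_ellipse_angle a k q hX) eta heta)
    as [d [hd hcont]].
  exists (Rmin d (eta / (2 * PI))).
  split; [apply Rmin_pos; [lra|apply Rdiv_lt_0_compat; lra]|].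
  intros t' q' htt hqq.
  pose proof (Rmin_l d (eta / (2 * PI))). pose proof (Rmin_r d (eta / (2 * PI))).
  specialize (hcont q' ltac:(lra)). rewrite Rabs_minus_sym in hcont.
  assert (2 * PI * Rabs (t - t') < eta).
  { apply Rmult_lt_reg_r with (/ (2 * PI)); [apply Rinv_0_lt_compat; lra|].
    replace (2 * PI * Rabs (t - t') * / (2 * PI)) with (Rabs (t - t')) by (field; lra).
    unfold Rdiv in *. lra. }
  apply edist_ellipse_lt; [exact ha|].
  replace (k + (1 - t) * ellipse_angle a k q + t * s
             - (k + (1 - t') * ellipse_angle a k q' + t' * s))
    with ((1 - t) * ellipse_angle a k q + t * s - ((1 - t') * ellipse_angle a k q' + t' * s))
    by ring.
  eapply Rle_lt_trans; [apply affine_path_dist; auto; apply ellipse_angle_bound|].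
  unfold eta in *. lra.
Qed.

(** * Unimodality of the distance *)

Lemma derive_nonpos_strict_decreasing (f f' : R -> R) x y : x < y ->
  (forall c, x <= c <= y -> derivable_pt_lim f c (f' c)) ->
  (forall c, x < c < y -> f' c <= 0) ->
  (forall c1 c2, x < c1 -> c1 < c2 -> c2 < y -> f' c1 < 0 \/ f' c2 < 0) ->
  f y < f x.
Proof.
  intros hxy hder hle hzero. set (m := (x + y) / 2).
  destruct (MVT_cor2 f f' x m) as [c1 [e1 h1]]; [unfold m; lra| |].
  { intros c hc. apply hder. unfold m in hc; lra. }
  destruct (MVT_cor2 f f' m y) as [c2 [e2 h2]]; [unfold m; lra| |].
  { intros c hc. apply hder. unfold m in hc; lra. }
  assert (hm : x < m < y) by (unfold m; lra).
  pose proof (hle c1 ltac:(lra)). pose proof (hle c2 ltac:(lra)).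
  destruct (hzero c1 c2) as [h|h]; try lra; nra.
Qed.

(* With [a ^ 2 = 1 + b] and [th = t0 + 2 * be], the factorization
   [sqdist' a (ellipse a t0) th = 4 sin(be)^2 (1 + b sin(t0 + be)^2) W b t0 be]
   reduces the sign of the derivative to that of [W]. *)
Definition W (b t0 be : R) : R :=
  cos be / sin be + b * sin (t0 + be) * cos (t0 + be) / (1 + b * sin (t0 + be) ^ 2).
Definition W' (b t0 be : R) : R :=
  - 1 / sin be ^ 2 + b * (1 - (2 + b) * sin (t0 + be) ^ 2) / (1 + b * sin (t0 + be) ^ 2) ^ 2.

Lemma sqdist'_factor a b t0 be : a ^ 2 = 1 + b -> 0 <= b -> sin be <> 0 ->
  sqdist' a (ellipse a t0) (t0 + 2 * be) =
  4 * sin be ^ 2 * (1 + b * sin (t0 + be) ^ 2) * W b t0 be.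
Proof.
  intros ha hb hs.
  assert (hd : 1 + b * sin (t0 + be) ^ 2 <> 0) by nra.
  unfold sqdist', W, ellipse; cbn [fst snd].
  set (ph := t0 + be).
  replace (t0 + 2 * be) with (ph + be) by (unfold ph; ring).
  replace t0 with (ph - be) by (unfold ph; ring).
  rewrite cos_plus, sin_plus, cos_minus, sin_minus.
  pose proof (sin2_cos2 ph) as e. unfold Rsqr in e.
  field_simplify; auto.
  rewrite ha. replace (cos ph ^ 2) with (1 - sin ph ^ 2) by nra. ring.
Qed.

Lemma W_derive b t0 be : 0 <= b -> sin be <> 0 ->
  derivable_pt_lim (W b t0) be (W' b t0 be).
Proof.
  intros hb hs.
  assert (hd : 1 + b * sin (t0 + be) ^ 2 <> 0) by nra.
  apply is_derive_Reals. unfold W, W'. auto_derive; [repeat split; auto|].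
  pose proof (sin2_cos2 be) as e1. pose proof (sin2_cos2 (t0 + be)) as e2. unfold Rsqr in *.
  assert (h1 : cos be ^ 2 = 1 - sin be ^ 2) by nra.
  assert (h2 : cos (t0 + be) ^ 2 = 1 - sin (t0 + be) ^ 2) by nra.
  field_simplify; [rewrite h1, h2; f_equal; ring | split; nra ..].
Qed.

(* The key estimate: for [b <= 1] the second summand of [W'] is at most [1 <= 1 / sin be ^ 2]. *)
Lemma W'_mul_sin_sqr_le b t0 be : 0 <= b <= 1 -> sin be <> 0 ->
  W' b t0 be * sin be ^ 2 <= sin be ^ 2 - 1.
Proof.
  intros hb hs.
  pose proof (sin2_cos2 (t0 + be)) as e. unfold Rsqr in e.
  set (S := sin (t0 + be) ^ 2).
  assert (hS : 0 <= S <= 1) by (unfold S; nra).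
  set (A := b * (1 - (2 + b) * S) / (1 + b * S) ^ 2).
  assert (hA : A <= 1).
  { apply Rmult_le_reg_r with ((1 + b * S) ^ 2); [nra|].
    unfold A, Rdiv. rewrite Rmult_assoc, Rinv_l by nra. nra. }
  replace (W' b t0 be * sin be ^ 2) with (-1 + A * sin be ^ 2)
    by (unfold W', A, S; field; split; [nra | auto]).
  nra.
Qed.

Lemma W_decreasing b t0 x y : 0 <= b <= 1 -> 0 < x -> x < y -> y < PI ->
  W b t0 y < W b t0 x.
Proof.
  intros hb hx hxy hy.
  assert (hsin : forall c, x <= c <= y -> 0 < sin c ^ 2 <= 1 /\
                   W' b t0 c * sin c ^ 2 <= sin c ^ 2 - 1).
  { intros c hc. assert (0 < sin c) by (apply sin_gt_0; lra).
    pose proof (SIN_bound c). split; [nra|]. apply W'_mul_sin_sqr_le; lra. }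
  apply derive_nonpos_strict_decreasing with (W' b t0); auto.
  - intros c hc. apply W_derive; [lra|]. destruct (hsin c hc). nra.
  - intros c hc. destruct (hsin c ltac:(lra)). nra.
  - intros c1 c2 h1 h12 h2.
    destruct (hsin c1 ltac:(lra)), (hsin c2 ltac:(lra)).
    destruct (Rlt_le_dec (sin c1 ^ 2) 1); [left; nra|].
    destruct (Rlt_le_dec (sin c2 ^ 2) 1); [right; nra|].
    exfalso.
    pose proof (sin2_cos2 c1) as q1. pose proof (sin2_cos2 c2) as q2. unfold Rsqr in *.
    assert (cos c1 = 0) by nra. assert (cos c2 = 0) by nra.
    pose proof (cos_decreasing_1 c1 c2 ltac:(lra) ltac:(lra) ltac:(lra) ltac:(lra) h12). lra.
Qed.

Lemma W_root b t0 : 0 <= b <= 1 ->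
  exists be, PI / 4 <= be <= 3 * (PI / 4) /\ W b t0 be = 0.
Proof.
  intros hb. pose proof PI_RGT_0.
  assert (hs2 : 0 < sqrt 2) by (apply sqrt_lt_R0; lra).
  assert (hg : forall ph, Rabs (b * sin ph * cos ph / (1 + b * sin ph ^ 2)) <= / 2).
  { intros ph. pose proof (sin2_cos2 ph) as e. unfold Rsqr in e.
    assert (hD : 0 < 1 + b * sin ph ^ 2) by nra.
    rewrite Rabs_div by lra. rewrite (Rabs_pos_eq (1 + _)) by lra.
    apply Rmult_le_reg_r with (1 + b * sin ph ^ 2); [lra|].
    unfold Rdiv. rewrite Rmult_assoc, Rinv_l, Rmult_1_r by lra. apply Rabs_le.
    pose proof (pow2_ge_0 (sin ph - cos ph)). pose proof (pow2_ge_0 (sin ph + cos ph)).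
    split; nra. }
  destruct (IVT_interv (fun x => - W b t0 x) (PI / 4) (3 * (PI / 4))) as [z [hz ez]].
  - intros c hc. apply continuity_pt_opp, derivable_continuous_pt.
    exists (W' b t0 c). apply W_derive; [lra|].
    pose proof (sin_gt_0 c ltac:(lra) ltac:(lra)). lra.
  - lra.
  - unfold W. rewrite cos_PI4, sin_PI4.
    replace (1 / sqrt 2 / (1 / sqrt 2)) with 1 by (field; lra).
    pose proof (hg (t0 + PI / 4)) as h. apply Rabs_le_between in h. lra.
  - unfold W. rewrite cos_3PI4, sin_3PI4.
    replace (-1 / sqrt 2 / (1 / sqrt 2)) with (-1) by (field; lra).
    pose proof (hg (t0 + 3 * (PI / 4))) as h. apply Rabs_le_between in h. lra.
  - exists z. split; [auto|lra].
Qed.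

Record sqdist_profile (a t0 t1 : R) : Prop := {
  profile_range : t0 < t1 < t0 + 2 * PI;
  profile_crit : sqdist' a (ellipse a t0) t1 = 0;
  profile_pos : forall th, t0 < th < t1 -> 0 < sqdist' a (ellipse a t0) th;
  profile_neg : forall th, t1 < th < t0 + 2 * PI -> sqdist' a (ellipse a t0) th < 0 }.

Lemma sqdist_profile_exists a t0 : 1 < a -> a <= sqrt 2 ->
  exists t1, sqdist_profile a t0 t1.
Proof.
  intros h1 h2. pose proof PI_RGT_0.
  set (b := a ^ 2 - 1).
  assert (hb : 0 <= b <= 1).
  { pose proof (sqrt_sqrt 2 ltac:(lra)). pose proof (sqrt_pos 2). unfold b. nra. }
  assert (hab : a ^ 2 = 1 + b) by (unfold b; ring).
  destruct (W_root b t0 hb) as [be1 [hbe1 hW1]].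
  assert (key : forall th, t0 < th < t0 + 2 * PI ->
     exists C, 0 < C /\ sqdist' a (ellipse a t0) th = C * W b t0 ((th - t0) / 2)).
  { intros th hth.
    assert (hs : 0 < sin ((th - t0) / 2)) by (apply sin_gt_0; lra).
    set (be := (th - t0) / 2) in *.
    exists (4 * sin be ^ 2 * (1 + b * sin (t0 + be) ^ 2)). split.
    - pose proof (pow2_ge_0 (sin (t0 + be))). apply Rmult_lt_0_compat; nra.
    - rewrite <- (sqdist'_factor a b t0 be) by (auto || lra). f_equal. unfold be. field. }
  exists (t0 + 2 * be1). constructor; [lra| | |].
  - destruct (key (t0 + 2 * be1) ltac:(lra)) as [C [_ ->]].
    replace ((t0 + 2 * be1 - t0) / 2) with be1 by field. rewrite hW1. ring.
  - intros th hth. destruct (key th ltac:(lra)) as [C [hC ->]].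
    assert (0 < W b t0 ((th - t0) / 2)) by (rewrite <- hW1; apply W_decreasing; lra).
    nra.
  - intros th hth. destruct (key th ltac:(lra)) as [C [hC ->]].
    assert (W b t0 ((th - t0) / 2) < 0) by (rewrite <- hW1; apply W_decreasing; lra).
    nra.
Qed.

(** * Extrema of the distance and balls *)

Definition crosses_level (f : R -> R) (th : R) : Prop :=
  forall eta, 0 < eta -> exists x y,
    Rabs (x - th) < eta /\ Rabs (y - th) < eta /\ f x < f th < f y.

Lemma increasing_crosses_level (f : R -> R) u v th : u < th < v ->
  (forall x y, u <= x -> x < y -> y <= v -> f x < f y) -> crosses_level f th.
Proof.
  intros hth hinc eta heta.
  set (e := Rmin eta (Rmin (th - u) (v - th)) / 2).
  assert (he : 0 < e /\ e < eta /\ e < th - u /\ e < v - th).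
  { assert (0 < Rmin eta (Rmin (th - u) (v - th))) by (repeat apply Rmin_pos; lra).
    pose proof (Rmin_l eta (Rmin (th - u) (v - th))).
    pose proof (Rmin_r eta (Rmin (th - u) (v - th))).
    pose proof (Rmin_l (th - u) (v - th)). pose proof (Rmin_r (th - u) (v - th)).
    unfold e. lra. }
  exists (th - e), (th + e).
  replace (th - e - th) with (- e) by ring. replace (th + e - th) with e by ring.
  rewrite Rabs_Ropp, Rabs_pos_eq by lra.
  repeat split; try lra; apply hinc; lra.
Qed.

Lemma decreasing_crosses_level (f : R -> R) u v th : u < th < v ->
  (forall x y, u <= x -> x < y -> y <= v -> f y < f x) -> crosses_level f th.
Proof.
  intros hth hdec eta heta.
  assert (hcross : crosses_level (fun x => - f x) th).
  { apply increasing_crosses_level with u v; auto.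
    intros x y hx hxy hy. specialize (hdec x y hx hxy hy). lra. }
  destruct (hcross eta heta) as [x [y [hx [hy hf]]]].
  exists y, x. repeat split; auto; lra.
Qed.

Lemma crosses_level_not_local_extremum a p th : 0 < a ->
  crosses_level (sqdist a p) th -> ~ local_extremum_on (onY a) (edist p) (ellipse a th).
Proof.
  intros ha hcross hext.
  assert (hnear : exists eps, 0 < eps /\
      ((forall x, Rabs (x - th) < eps -> edist p (ellipse a th) <= edist p (ellipse a x)) \/
       (forall x, Rabs (x - th) < eps -> edist p (ellipse a x) <= edist p (ellipse a th)))).
  { destruct hext as [[_ [eps [he hm]]] | [_ [eps [he hm]]]];
      exists (eps / (a + 1)); (split; [apply Rdiv_lt_0_compat; lra|]); [left | right];
      intros x hx; exact (hm _ (onY_ellipse a x ha) (edist_ellipse_lt a x th eps ltac:(lra) hx)). }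
  destruct hnear as [eps [he hnear]].
  destruct (hcross eps he) as [x [y [hx [hy [hlo hhi]]]]].
  pose proof (sqrt_lt_1_alt _ _ (conj (sqdist_nonneg a p x) hlo)).
  pose proof (sqrt_lt_1_alt _ _ (conj (sqdist_nonneg a p th) hhi)).
  destruct hnear as [h | h]; [specialize (h x hx) | specialize (h y hy)];
    rewrite !edist_ellipse in h; lra.
Qed.

Lemma global_min_on_center a p : onY a p -> global_min_on (onY a) (edist p) p.
Proof. intros hp. split; auto. intros r _. rewrite edist_self. apply sqrt_pos. Qed.

Section Profile.

Variables a t0 t1 : R.
Hypothesis ha : 0 < a.
Hypothesis prof : sqdist_profile a t0 t1.

Local Notation p := (ellipse a t0).
Local Notation F := (sqdist a p).

Lemma profile_increasing x y : t0 <= x -> x < y -> y <= t1 -> F x < F y.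
Proof.
  intros hx hxy hy.
  destruct (MVT_cor2 F (sqdist' a p) x y hxy) as [c [e hc]]; [intros; apply sqdist_derive|].
  pose proof (profile_pos _ _ _ prof c ltac:(lra)). nra.
Qed.

Lemma profile_decreasing x y : t1 <= x -> x < y -> y <= t0 + 2 * PI -> F y < F x.
Proof.
  intros hx hxy hy.
  destruct (MVT_cor2 F (sqdist' a p) x y hxy) as [c [e hc]]; [intros; apply sqdist_derive|].
  pose proof (profile_neg _ _ _ prof c ltac:(lra)). nra.
Qed.

Lemma profile_max th : t0 <= th <= t0 + 2 * PI -> F th <= F t1.
Proof.
  intros hth. destruct (Rtotal_order th t1) as [h|[->|h]].
  - pose proof (profile_increasing th t1 ltac:(lra) h ltac:(lra)). lra.
  - lra.
  - pose proof (profile_decreasing t1 th ltac:(lra) h ltac:(lra)). lra.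
Qed.

Lemma h_rel_profile th : t0 <= th < t0 + 2 * PI ->
  h_rel a (ellipse a th) p <-> th = t1.
Proof.
  intros hth. pose proof (profile_range _ _ _ prof).
  split.
  - intros [_ [_ [hne hn]]]. apply (on_normal_iff a p th ha) in hn.
    destruct (Req_dec th t0) as [->|ne]; [contradiction|].
    destruct (Rtotal_order th t1) as [h|[h|h]]; auto.
    + pose proof (profile_pos _ _ _ prof th ltac:(lra)). lra.
    + pose proof (profile_neg _ _ _ prof th ltac:(lra)). lra.
  - intros ->. split; [apply onY_ellipse; auto|]. split; [apply onY_ellipse; auto|]. split.
    + intros e. pose proof (profile_increasing t0 t1 ltac:(lra) ltac:(lra) ltac:(lra)).
      assert (F t1 = 0) by (rewrite e; apply sqdist_ellipse_self).
      pose proof (sqdist_nonneg a p t0). lra.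
    + apply on_normal_iff; auto. exact (profile_crit _ _ _ prof).
Qed.

Lemma global_max_on_h_rel q : h_rel a q p -> global_max_on (onY a) (edist p) q.
Proof.
  intros hq. destruct (ellipse_surj a q t0 ha (proj1 hq)) as [th [hth ->]].
  apply (h_rel_profile th hth) in hq. subst th.
  split; [apply onY_ellipse; auto|]. intros r hr.
  destruct (ellipse_surj a r t0 ha hr) as [th [hth' ->]].
  rewrite !edist_ellipse. apply sqrt_le_1_alt, profile_max. lra.
Qed.

Lemma local_extremum_on_profile q :
  local_extremum_on (onY a) (edist p) q <-> q = p \/ h_rel a q p.
Proof.
  pose proof (profile_range _ _ _ prof). split.
  - intros hext.
    assert (hq : onY a q) by (destruct hext as [[h _]|[h _]]; auto).
    destruct (ellipse_surj a q t0 ha hq) as [th [hth ->]].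
    destruct (Req_dec th t0) as [->|n0]; [now left|].
    destruct (Req_dec th t1) as [->|n1]; [right; apply h_rel_profile; lra|].
    exfalso. revert hext. apply crosses_level_not_local_extremum; auto.
    destruct (Rlt_le_dec th t1).
    + apply increasing_crosses_level with t0 t1; [lra|]. apply profile_increasing.
    + apply decreasing_crosses_level with t1 (t0 + 2 * PI); [lra|]. apply profile_decreasing.
  - intros [-> | hq].
    + left. destruct (global_min_on_center a p (onY_ellipse a t0 ha)) as [h1 h2].
      split; auto. exists 1. split; [lra|]. auto.
    + right. destruct (global_max_on_h_rel q hq) as [h1 h2].
      split; auto. exists 1. split; [lra|]. auto.
Qed.

(* [k] is the parameter antipodal to [t1]; [k + s = t0 + 2 * PI] is a parameter of [p]. *)
Local Notation k := (t1 + PI).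
Local Notation s := (t0 + PI - t1).

Lemma profile_arc_le s1 u : - PI < s1 < PI -> (s1 <= u <= s \/ s <= u <= s1) ->
  F (k + u) <= F (k + s1).
Proof.
  intros hs1 hu. pose proof (profile_range _ _ _ prof).
  destruct (Req_dec u s1) as [->|ne]; [lra|].
  destruct hu as [hu|hu].
  - left. apply profile_decreasing; lra.
  - replace (k + u) with (k + u - 2 * PI + 2 * PI) by ring.
    replace (k + s1) with (k + s1 - 2 * PI + 2 * PI) by ring.
    rewrite !sqdist_period. left. apply profile_increasing; lra.
Qed.

Lemma ball_contractible (P : R -> Prop) :
  (forall d1 d2, 0 <= d1 <= d2 -> P d2 -> P d1) -> P 0 ->
  ~ P (edist p (ellipse a t1)) -> contractible (fun q => onY a q /\ P (edist p q)).
Proof.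
  intros hP hP0 hmax. pose proof (profile_range _ _ _ prof). pose proof PI_RGT_0.
  assert (hspec : forall q, onY a q /\ P (edist p q) ->
            1 + rot_x a k q <> 0 /\ ellipse a (k + ellipse_angle a k q) = q).
  { intros q [hq hPq]. apply ellipse_angle_spec; auto.
    replace (k + PI) with (t1 + 2 * PI) by ring. rewrite ellipse_period.
    intros ->. contradiction. }
  exists p, (contraction a k s). split; [|split; [|split; [|split]]].
  - split; [apply onY_ellipse; auto|]. now rewrite edist_self.
  - intros t q ht hq. split; [apply onY_ellipse; auto|].
    apply hP with (edist p q); [|apply hq]. split; [apply sqrt_pos|].
    destruct (hspec q hq) as [_ hrep]. rewrite <- hrep at 2.
    unfold contraction. rewrite !edist_ellipse. apply sqrt_le_1_alt.
    replace (k + (1 - t) * ellipse_angle a k q + t * s)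
      with (k + ((1 - t) * ellipse_angle a k q + t * s)) by ring.
    pose proof (ellipse_angle_bound a k q) as hb. apply Rabs_def2 in hb.
    apply profile_arc_le; [lra|].
    destruct (Rle_lt_dec (ellipse_angle a k q) s); [left|right]; split; nra.
  - intros q hq. destruct (hspec q hq) as [_ hrep]. rewrite <- hrep at 2.
    unfold contraction. f_equal. ring.
  - intros q _. unfold contraction. rewrite <- (ellipse_period a t0). f_equal. ring.
  - intros t q ht hq eps he.
    destruct (contraction_continuous a k s t q ltac:(lra) (proj1 (hspec q hq)) ht
                ltac:(apply Rabs_def1; lra) eps he) as [d [hd hcont]].
    exists d. split; [exact hd|]. intros t' q' _ _. apply hcont.
Qed.

End Profile.

Lemma ball_contractible_or_full a c (P : R -> Prop) : 1 < a -> a <= sqrt 2 -> onY a c ->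
  (forall d1 d2, 0 <= d1 <= d2 -> P d2 -> P d1) ->
  (exists q, onY a q /\ P (edist c q)) ->
  contractible (fun q => onY a q /\ P (edist c q)) \/ (forall q, onY a q -> P (edist c q)).
Proof.
  intros h1 h2 hc hP [q0 [_ hq0]]. assert (ha : 0 < a) by lra.
  destruct (ellipse_surj a c 0 ha hc) as [t0 [_ ->]].
  destruct (sqdist_profile_exists a t0 h1 h2) as [t1 prof].
  destruct (classic (P (edist (ellipse a t0) (ellipse a t1)))) as [hmax|hmax].
  - right. intros q hq. apply hP with (edist (ellipse a t0) (ellipse a t1)); auto.
    split; [apply sqrt_pos|].
    destruct (ellipse_surj a q t0 ha hq) as [th [hth ->]].
    rewrite !edist_ellipse. apply sqrt_le_1_alt. eapply profile_max; eauto. lra.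
  - left. eapply ball_contractible; eauto.
    apply hP with (edist (ellipse a t0) q0); auto. split; [lra|apply sqrt_pos].
Qed.

Theorem mainTheorem15 (a : R) (ha : 1 < a) (ha2 : a <= sqrt 2) :
  (forall p : point, onY a p ->
     (forall q, local_extremum_on (onY a) (edist p) q <->
                  (q = p \/ h_rel a q p)) /\
     global_min_on (onY a) (edist p) p /\
     (exists q, h_rel a q p) /\
     (forall q, h_rel a q p -> global_max_on (onY a) (edist p) q)) /\
  (forall (c : point) (r : R), onY a c ->
     ((exists q, onY a q /\ open_ball c r q) ->
        contractible (fun q => onY a q /\ open_ball c r q) \/
        (forall q, onY a q -> open_ball c r q)) /\
     ((exists q, onY a q /\ closed_ball c r q) ->
        contractible (fun q => onY a q /\ closed_ball c r q) \/
        (forall q, onY a q -> closed_ball c r q))).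
Proof.
  assert (ha0 : 0 < a) by lra.
  split.
  - intros p hp.
    destruct (ellipse_surj a p 0 ha0 hp) as [t0 [_ ->]].
    destruct (sqdist_profile_exists a t0 ha ha2) as [t1 prof].
    pose proof (profile_range _ _ _ prof).
    split; [apply local_extremum_on_profile with t1; auto|].
    split; [apply global_min_on_center; auto|].
    split; [exists (ellipse a t1); apply h_rel_profile with t1; auto; lra|].
    apply global_max_on_h_rel with t1; auto.
  - intros c r hc. unfold open_ball, closed_ball.
    split; intros hne.
    + apply (ball_contractible_or_full a c (fun d => d < r)); auto. intros; lra.
    + apply (ball_contractible_or_full a c (fun d => d <= r)); auto. intros; lra.
Qed.
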